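(* Let $B$ be a board with $c$ colors. If, in some row or column, there are fewer than $c-1$ blank (empty) cells between some sink and the boundary of the grid, then $B$ has no perfect layout.
   Context: A board is an $m\times n$ grid of unit cells in which exactly $c$ cells are sinks, one of each of $c$ colors, and all other cells are empty. A layout places, in some of the empty cells, arrows, each having one of the $c$ colors and one of the four cardinal directions. A packet of color $i$ may enter the grid through any unit edge of the outer boundary of the grid, into the adjacent cell, moving perpendicular to that edge into the grid; it moves one cell at a time in its current direction, and whenever it enters a cell containing an arrow of color $i$ its direction becomes that arrow's direction (arrows of other colors are ignored). The packet succeeds if it enters the sink of color $i$; it fails if it enters a sink of another color, leaves the grid, or travels forever without reaching a sink. A perfect layout is a layout in which every packet of every color entering through every boundary edge succeeds. *)

From mathcomp Require Import all_boot.
Set Implicit Arguments. Unset Strict Implicit. Unset Printing Implicit Defensive.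

(* Cells of an m x n grid: (row, column); row 0 is the top row, column 0 the
   leftmost column. *)
Definition cell (m n : nat) := ('I_m * 'I_n)%type.

Inductive dir := Up | Down | Left | Right.

Definition move (m n : nat) (p : cell m n) (d : dir) : option (cell m n) :=
  match d with
  | Down => omap (fun i : 'I_m => (i, p.2)) (insub (p.1).+1)
  | Up => if (p.1 : nat) == 0 then None
          else omap (fun i : 'I_m => (i, p.2)) (insub (p.1).-1)
  | Right => omap (fun j : 'I_n => (p.1, j)) (insub (p.2).+1)
  | Left => if (p.2 : nat) == 0 then None
            else omap (fun j : 'I_n => (p.1, j)) (insub (p.2).-1)
  end.

(* A board: sink k is the position of the sink of color k (k : 'I_c);
   sinks are pairwise distinct (injectivity of [sink]). *)
Definition is_sink (m n c : nat) (sink : 'I_c -> cell m n) (p : cell m n) : bool :=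
  [exists k, sink k == p].

(* A layout: an optional arrow (color, direction) in each cell. *)
Definition layout (m n c : nat) := cell m n -> option ('I_c * dir).

Definition valid_layout (m n c : nat) (sink : 'I_c -> cell m n) (L : layout m n c) :=
  forall p, L p <> None -> ~~ is_sink sink p.

Inductive outcome (m n : nat) :=
  | Succ | Fail | Cont of cell m n & dir.
Arguments Succ {m n}. Arguments Fail {m n}.

(* A packet of color k has just entered cell p moving in direction d. *)
Definition step (m n c : nat) (sink : 'I_c -> cell m n) (L : layout m n c)
  (k : 'I_c) (p : cell m n) (d : dir) : outcome m n :=
  if sink k == p then Succ
  else if is_sink sink p then Fail
  else
    let d' := match L p with
              | Some (k', e) => if k' == k then e else d
              | None => d
              end in
    match move p d' with
    | Some q => Cont q d'
    | None => Fail
    end.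

Fixpoint run (m n c : nat) (sink : 'I_c -> cell m n) (L : layout m n c)
  (k : 'I_c) (t : nat) (p : cell m n) (d : dir) : outcome m n :=
  match t with
  | 0 => Cont p d
  | t'.+1 => match run sink L k t' p d with
             | Cont q e => step sink L k q e
             | r => r
             end
  end.

Definition succeeds (m n c : nat) (sink : 'I_c -> cell m n) (L : layout m n c)
  (k : 'I_c) (p : cell m n) (d : dir) : Prop :=
  exists t, run sink L k t p d = Succ.

(* (p, d) is an entry through a boundary edge: the packet enters cell p,
   moving in direction d perpendicular to a boundary edge of p on the
   side opposite to d. *)
Definition entry (m n : nat) (p : cell m n) (d : dir) : bool :=
  match d with
  | Down => (p.1 : nat) == 0
  | Up => (p.1 : nat) == m.-1
  | Right => (p.2 : nat) == 0
  | Left => (p.2 : nat) == n.-1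
  end.

Definition perfect (m n c : nat) (sink : 'I_c -> cell m n) (L : layout m n c) : Prop :=
  valid_layout sink L /\
  forall (k : 'I_c) (p : cell m n) (d : dir), entry p d -> succeeds sink L k p d.

Definition ray (m n : nat) (s : cell m n) (d : dir) : {set cell m n} :=
  [set p : cell m n |
    match d with
    | Up => (p.2 == s.2) && ((p.1 : nat) < s.1)
    | Down => (p.2 == s.2) && ((s.1 : nat) < p.1)
    | Left => (p.1 == s.1) && ((p.2 : nat) < s.2)
    | Right => (p.1 == s.1) && ((s.2 : nat) < p.2)
    end].

Definition blanks_to_boundary (m n c : nat) (sink : 'I_c -> cell m n)
  (s : cell m n) (d : dir) : nat :=
  #|[set p in ray s d | ~~ is_sink sink p]|.

From mathcomp Require Import all_boot zify.
Set Implicit Arguments. Unset Strict Implicit. Unset Printing Implicit Defensive.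

(* Let s be a sink and d a direction, and consider the packets
   entering the grid from the boundary on the far side of s, travelling
   towards s along its row or column in direction e = opposite of d; they
   cross the cells of [ray s d] before reaching s.  Let t be the first sink
   on this straight path, of color i0.  A packet of any other color j must
   be deflected before reaching it, hence some blank cell on the path
   (before the first sink) carries an arrow of color j.  The c - 1 colors
   j <> i0 thus need pairwise distinct blank cells of the ray, so the ray
   holds at least c - 1 blank cells. *)

Section Dynamics.

Variables (m n c : nat) (sink : 'I_c -> cell m n) (L : layout m n c).

Lemma sink_is_sink (k : 'I_c) : is_sink sink (sink k).
Proof. by apply/existsP; exists k. Qed.

Lemma run_fail_mono (k : 'I_c) p d t T :
  run sink L k t p d = Fail -> t <= T -> run sink L k T p d = Fail.
Proof.
move=> Hfail; elim: T => [|T IH]; first by rewrite leqn0 => /eqP <-.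
by rewrite leq_eqVlt => /orP [/eqP <- //| /IH /= ->].
Qed.

Definition arrow_color (p : cell m n) : option 'I_c := omap fst (L p).

Definition straight_path (P : nat -> cell m n) (e : dir) (N : nat) :=
  forall i, i < N -> move (P i) e = Some (P i.+1).

Lemma run_straight (j : 'I_c) (P : nat -> cell m n) e t :
  straight_path P e t ->
  (forall i, i < t -> ~~ is_sink sink (P i)) ->
  (forall i, i < t -> arrow_color (P i) != Some j) ->
  run sink L j t (P 0) e = Cont (P t) e.
Proof.
elim: t => [//|t IH] Hpath Hblank Hcol /=.
rewrite IH => [|i lt|i lt|i lt]; last 3 first.
- exact: Hpath (ltnW lt).
- exact: Hblank (ltnW lt).
- exact: Hcol (ltnW lt).
have Hns := Hblank t (ltnSn t).
have Hnj : (sink j == P t) = false.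
  by apply: contraNF Hns => /eqP <-; exact: sink_is_sink.
rewrite /step Hnj (negbTE Hns).
have Hm := Hpath t (ltnSn t); move: (Hcol t (ltnSn t)); rewrite /arrow_color.
case: (L (P t)) => [[k' e']|] /= Hk; last by rewrite Hm.
by rewrite ifN ?Hm //; apply: contraNN Hk => /eqP ->.
Qed.

Hypothesis Hinj : injective sink.
Hypothesis HL : perfect sink L.

Lemma color_needs_arrow (P : nat -> cell m n) e t (i0 j : 'I_c) :
  entry (P 0) e -> straight_path P e t ->
  (forall i, i < t -> ~~ is_sink sink (P i)) -> P t = sink i0 -> j != i0 ->
  exists2 i, i < t & arrow_color (P i) = Some j.
Proof.
move=> Hent Hpath Hblank HPt Hj.
case: (boolP [exists i : 'I_t, arrow_color (P i) == Some j]).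
  by case/existsP => i /eqP Hi; exists i.
move=> Hnone; exfalso.
have Hcol i : i < t -> arrow_color (P i) != Some j.
  by move=> lt; apply: contraNN Hnone => Hi; apply/existsP; exists (Ordinal lt).
have Hreach i : i <= t -> run sink L j i (P 0) e = Cont (P i) e.
  move=> le; apply: run_straight => k lt.
  - exact: Hpath (leq_trans lt le).
  - exact: Hblank (leq_trans lt le).
  - exact: Hcol (leq_trans lt le).
have Hfail : run sink L j t.+1 (P 0) e = Fail.
  by rewrite /= Hreach // /step HPt sink_is_sink (inj_eq Hinj) (negbTE Hj).
case: HL => _ /(_ j _ _ Hent) [T HT].
case: (leqP T t) => lT; first by rewrite Hreach in HT.
by rewrite (run_fail_mono Hfail lT) in HT.
Qed.

End Dynamics.

Lemma card_colors_le (T : finType) c (S : {set T}) (f : T -> option 'I_c)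
  (i0 : 'I_c) :
  (forall j, j != i0 -> Some j \in f @: S) -> c.-1 <= #|S|.
Proof.
move=> Hcol.
have Hsub : [set Some j | j in [set~ i0]] \subset f @: S.
  by apply/subsetP => x /imsetP [j]; rewrite !inE => /Hcol Hj ->.
have := subset_leq_card Hsub.
rewrite card_imset; last by move=> ? ? [].
rewrite cardsC1 card_ord => H.
exact: leq_trans H (leq_imset_card _ _).
Qed.

Lemma blanks_on_entry_path m n c (sink : 'I_c -> cell m n)
  (Hinj : injective sink) (L : layout m n c) (HL : perfect sink L)
  (P : nat -> cell m n) e N (A : {set cell m n}) :
  entry (P 0) e -> straight_path P e N -> is_sink sink (P N) ->
  (forall i, i < N -> P i \in A) ->
  c.-1 <= #|[set p in A | ~~ is_sink sink p]|.
Proof.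
move=> Hent Hpath HN HA.
have [t Ht Hmin] := ex_minnP (ex_intro (fun i => is_sink sink (P i)) N HN).
have HtN : t <= N by apply: Hmin.
have Hblank i : i < t -> ~~ is_sink sink (P i).
  by move=> lt; apply: contraL lt => /Hmin; rewrite leqNgt.
have Hpath_t : straight_path P e t.
  by move=> i lt; apply: Hpath (leq_trans lt HtN).
case/existsP: Ht => i0 /eqP HPt.
apply: (card_colors_le (f := arrow_color L) (i0 := i0)) => j Hj.
have [i lt Hi] := color_needs_arrow Hinj HL Hent Hpath_t Hblank (esym HPt) Hj.
rewrite -Hi; apply: imset_f.
by rewrite inE HA ?Hblank //; apply: leq_trans lt HtN.
Qed.

Lemma val_insubd_lt N (u : 'I_N) k : k < N -> val (insubd u k) = k.
Proof. by move=> lt; rewrite val_insubd lt. Qed.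

Lemma move_down m n (i j : 'I_m) (b : 'I_n) :
  val j = i.+1 -> move (i, b) Down = Some (j, b).
Proof. by move=> Hj; rewrite /= -Hj valK. Qed.

Lemma move_up m n (i j : 'I_m) (b : 'I_n) :
  (val j).+1 = i -> move (i, b) Up = Some (j, b).
Proof. by move=> Hj; rewrite /= -Hj /= valK. Qed.

Lemma move_right m n (a : 'I_m) (i j : 'I_n) :
  val j = i.+1 -> move (a, i) Right = Some (a, j).
Proof. by move=> Hj; rewrite /= -Hj valK. Qed.

Lemma move_left m n (a : 'I_m) (i j : 'I_n) :
  (val j).+1 = i -> move (a, i) Left = Some (a, j).
Proof. by move=> Hj; rewrite /= -Hj /= valK. Qed.

Lemma ray_entry_path m n (s : cell m n) (d : dir) :
  exists e (P : nat -> cell m n) N,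
    [/\ entry (P 0) e, straight_path P e N, P N = s
      & forall i, i < N -> P i \in ray s d].
Proof.
case: s => [a b]; have am := ltn_ord a; have bn := ltn_ord b.
case: d.
- exists Down, (fun i => (insubd a i, b)), a; split.
  + by rewrite /= val_insubd_lt //; lia.
  + by move=> i lt; apply: move_down; rewrite !val_insubd_lt //; lia.
  + by congr (_, _); apply: val_inj; rewrite val_insubd_lt.
  + by move=> i lt; rewrite inE /= eqxx val_insubd_lt //; lia.
- exists Up, (fun i => (insubd a (m.-1 - i), b)), (m.-1 - a); split.
  + by rewrite /= val_insubd_lt //; lia.
  + by move=> i lt; apply: move_up; rewrite !val_insubd_lt //; lia.
  + by congr (_, _); apply: val_inj; rewrite val_insubd_lt /=; lia.
  + by move=> i lt; rewrite inE /= eqxx val_insubd_lt //; lia.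
- exists Right, (fun i => (a, insubd b i)), b; split.
  + by rewrite /= val_insubd_lt //; lia.
  + by move=> i lt; apply: move_right; rewrite !val_insubd_lt //; lia.
  + by congr (_, _); apply: val_inj; rewrite val_insubd_lt.
  + by move=> i lt; rewrite inE /= eqxx val_insubd_lt //; lia.
- exists Left, (fun i => (a, insubd b (n.-1 - i))), (n.-1 - b); split.
  + by rewrite /= val_insubd_lt //; lia.
  + by move=> i lt; apply: move_left; rewrite !val_insubd_lt //; lia.
  + by congr (_, _); apply: val_inj; rewrite val_insubd_lt /=; lia.
  + by move=> i lt; rewrite inE /= eqxx val_insubd_lt //; lia.
Qed.

Theorem mainTheorem9 (m n c : nat) (sink : 'I_c -> cell m n)
  (Hsink : injective sink) :
  (exists (k : 'I_c) (d : dir), blanks_to_boundary sink (sink k) d < c.-1) ->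
  ~ (exists L : layout m n c, perfect sink L).
Proof.
move=> [k [d Hfew]] [L HL].
have [e [P [N [Hent Hpath HPN Hray]]]] := ray_entry_path (sink k) d.
have Hsink_end : is_sink sink (P N) by rewrite HPN sink_is_sink.
have := blanks_on_entry_path Hsink HL Hent Hpath Hsink_end Hray.
by rewrite /blanks_to_boundary leqNgt Hfew.
Qed.
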